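(* Let $G_1,G_2$ be disjoint graphs, $u\in V(G_1)$, $w\in V(G_2)$, $H=G_1uwG_2$, and $\Delta\nu:=\nu(H)-\nu(G_1)-\nu(G_2)$. For any pattern $\mathbf{s}$ on $H$ with $N(H)\mathbf{s}=\mathbf{1}$, let $\mathbf{s}_1,\mathbf{s}_2$ be its restrictions to $V(G_1)$, $V(G_2)$. Then, according to $(\mathcal{A}_{G_1}(u),\mathcal{A}_{G_2}(w))$: (i) $(0,0)$: $\mathcal{A}_H(u)=0$, $\mathcal{A}_H(w)=0$, $\Delta\nu=0$, and every such $\mathbf{s}$ has $N(G_1)\mathbf{s}_1=\mathbf{1}$, $N(G_2)\mathbf{s}_2=\mathbf{1}$. (ii) $(0,1)$: $\mathcal{A}_H(u)=0$, $\mathcal{A}_H(w)=1$, $\Delta\nu=0$, and every such $\mathbf{s}$ has $N(G_1)\mathbf{s}_1=\overline{\mathbf{c}_u}$, $N(G_2)\mathbf{s}_2=\mathbf{1}$. (iii) $(0,-1)$: $\mathcal{A}_H(u)=0$, $\mathcal{A}_H(w)=-1$, $\Delta\nu=0$; every such $\mathbf{s}$ has $N(G_2)\mathbf{s}_2=\mathbf{1}$, and $N(G_1)\mathbf{s}_1=\mathbf{1}$ if $\mathbf{s}(w)=0$, $N(G_1)\mathbf{s}_1=\overline{\mathbf{c}_u}$ if $\mathbf{s}(w)=1$. (iv) $(1,1)$: $\mathcal{A}_H(u)=-1$, $\mathcal{A}_H(w)=-1$, $\Delta\nu=1$; for every such $\mathbf{s}$, either $\mathbf{s}(u)=0,\mathbf{s}(w)=1$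 and $N(G_1)\mathbf{s}_1=\overline{\mathbf{c}_u}$, $N(G_2)\mathbf{s}_2=\mathbf{1}$, or $\mathbf{s}(u)=1,\mathbf{s}(w)=0$ and $N(G_1)\mathbf{s}_1=\mathbf{1}$, $N(G_2)\mathbf{s}_2=\overline{\mathbf{c}_w}$. (v) $(1,-1)$: $\mathcal{A}_H(u)=0$, $\mathcal{A}_H(w)=1$, $\Delta\nu=-1$, and every such $\mathbf{s}$ has $N(G_1)\mathbf{s}_1=\overline{\mathbf{c}_u}$, $N(G_2)\mathbf{s}_2=\mathbf{1}$. (vi) $(-1,-1)$: $\mathcal{A}_H(u)=0$, $\mathcal{A}_H(w)=0$, $\Delta\nu=-2$, and every such $\mathbf{s}$ has $N(G_1)\mathbf{s}_1=\mathbf{1}$, $N(G_2)\mathbf{s}_2=\mathbf{1}$. The remaining cases $(1,0)$, $(-1,0)$, $(-1,1)$ are obtained from (ii), (iii), (v) by interchanging the roles of $(G_1,u)$ and $(G_2,w)$. In compact form: $\Delta\nu=-2$ if $\mathcal{A}_{G_1}(u)=\mathcal{A}_{G_2}(w)=-1$ and $\Delta\nu=\mathcal{A}_{G_1}(u)\mathcal{A}_{G_2}(w)$ otherwise; and $\mathcal{A}_H(u)\equiv\mathcal{A}_{G_1}(u)(1+\mathcal{A}_{G_2}(w)) \pmod 3$, $\mathcal{A}_H(w)\equiv\mathcal{A}_{G_2}(w)(1+\mathcal{A}_{G_1}(u)) \pmod 3$ (with activation numbers in $\{-1,0,1\}$).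
   Context: For a finite simple graph $G$ with vertex set $\{v_1,\dots,v_n\}$, the closed adjacency matrix $N(G)$ is the $n\times n$ matrix over $\mathbb{Z}_2$ whose $(i,j)$ entry is $1$ iff $i=j$ or $v_i$ is adjacent to $v_j$. Vectors in $\mathbb{Z}_2^{V(G)}$ are patterns/configurations; $\mathbf{p}$ solves $\mathbf{c}$ if $N(G)\mathbf{p}=\mathbf{c}$. The nullity is $\nu(G):=\dim\operatorname{Ker}(N(G))$; elements of the kernel are null patterns. $\mathbf{1}$ denotes the all-ones configuration (of whichever graph is meant); it is solvable on every graph. For a vertex $u$, $\mathbf{c}_u$ is the configuration with $\mathbf{c}_u(v)=1$ iff $v=u$, and $\overline{\mathbf{c}_u}:=\mathbf{c}_u+\mathbf{1}$. A vertex $v$ is half-activated if $\boldsymbol{\ell}(v)=1$ for some null pattern $\boldsymbol{\ell}$; otherwise it is always-activated if $\mathbf{p}(v)=1$ for every $\mathbf{p}$ with $N(G)\mathbf{p}=\mathbf{1}$, and never-activated if $\mathbf{p}(v)=0$ for every such $\mathbf{p}$. The activation number $\mathcal{A}_G(v)$ is $1$, $0$, $-1$ for always-, never-, half-activated respectively. $G_1uwG_2$ denotes the graph obtained from the disjoint union of $G_1,G_2$ by adding the edge $uw$. *)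

From HB Require Import structures.
From mathcomp Require Import all_boot all_order all_algebra.
Set Implicit Arguments. Unset Strict Implicit. Unset Printing Implicit Defensive.
Import GRing.Theory Num.Theory.
Local Open Scope ring_scope.

Definition simple_graph (n : nat) (e : rel 'I_n) : Prop :=
  symmetric e /\ irreflexive e.

Definition Nmx (n : nat) (e : rel 'I_n) : 'M['F_2]_n :=
  \matrix_(i, j) ((i == j) || e i j)%:R.

Definition ones (n : nat) : 'cV['F_2]_n := const_mx 1.

Definition cbar (n : nat) (u : 'I_n) : 'cV['F_2]_n :=
  \col_i (if i == u then 1 else 0) + ones n.

(* Nullity: dim of {p | N p = 0}; kermx A^T has as row space {u | A u^T = 0}. *)
Definition nullity (n : nat) (e : rel 'I_n) : nat :=
  \rank (kermx (Nmx e)^T).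

Definition half_activated (n : nat) (e : rel 'I_n) (v : 'I_n) : bool :=
  [exists l : 'cV['F_2]_n, (Nmx e *m l == 0) && (l v 0 == 1)].

Definition always_activated (n : nat) (e : rel 'I_n) (v : 'I_n) : bool :=
  ~~ half_activated e v &&
  [forall p : 'cV['F_2]_n, (Nmx e *m p == ones n) ==> (p v 0 == 1)].

Definition never_activated (n : nat) (e : rel 'I_n) (v : 'I_n) : bool :=
  ~~ half_activated e v &&
  [forall p : 'cV['F_2]_n, (Nmx e *m p == ones n) ==> (p v 0 == 0)].

(* Activation number: 1 always, 0 never, -1 half.  (Exactly one of the three
   predicates holds, since 1 is always solvable.) *)
Definition act (n : nat) (e : rel 'I_n) (v : 'I_n) : int :=
  if half_activated e v then -1
  else if always_activated e v then 1 else 0.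

Definition joinG (n1 n2 : nat) (e1 : rel 'I_n1) (e2 : rel 'I_n2)
  (u : 'I_n1) (w : 'I_n2) : rel 'I_(n1 + n2) :=
  fun x y =>
    match split x, split y with
    | inl a, inl b => e1 a b
    | inr a, inr b => e2 a b
    | inl a, inr b => (a == u) && (b == w)
    | inr a, inl b => (a == w) && (b == u)
    end.

(* Over F_2 the closed adjacency matrix N of a simple graph is symmetric and
   satisfies x^T N x = x^T 1, so 1 is orthogonal to Ker N and N p = 1 is
   solvable.  A vertex v is not half-activated iff e_v is orthogonal to Ker N,
   i.e. iff N x = e_v is solvable, and then x(v) = p(v) for every solution of
   N p = 1; for a half-activated v neither e_v nor 1 + e_v lies in Im N.
   Since N(H) = [N1, e_u e_w^T; e_w e_u^T, N2], a solution s of N(H) s = 1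
   restricts to N1 s1 = 1 + s(w) e_u and N2 s2 = 1 + s(u) e_w, and the facts
   above pin down s(u) and s(w) from the activation types of u and w; kernel
   vectors are handled in the same way.  For the nullity, when N1 x = e_u a
   congruence makes N(H) block diagonal with blocks N1 and N2 + x(u) e_w e_w^T,
   and a symmetric rank-one update e e^T raises the rank by one if e is not in
   Im N, and otherwise (N y = e) changes it by -(e^T y). *)

From HB Require Import structures.
From mathcomp Require Import all_boot all_order all_algebra zify.
Import GRing.Theory.
Local Open Scope ring_scope.
Set Implicit Arguments. Unset Strict Implicit. Unset Printing Implicit Defensive.

Lemma scalar_mx_inj (V : nmodType) n : injective (@scalar_mx V n.+1).
Proof. by move=> a b /matrixP/(_ 0 0); rewrite !mxE !eqxx !mulr1n. Qed.

Lemma delta_row_mul (R : pzSemiRingType) n (x : 'cV[R]_n) i :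
  delta_mx 0 i *m x = (x i 0)%:M.
Proof. by rewrite -rowE [LHS]mx11_scalar !mxE. Qed.

Section FieldMatrix.
Variable F : fieldType.

Lemma sub_rowmx_orth_ker m n (A : 'M[F]_(m, n)) (b : 'rV_n) :
  (forall l : 'cV_n, A *m l = 0 -> b *m l = 0) -> (b <= A)%MS.
Proof.
move=> orth; rewrite submxE; apply/eqP/matrixP => i j; rewrite (ord1 i) mxE.
have := orth (cokermx A *m delta_mx j 0).
rewrite mulmxA mulmx_coker mul0mx => /(_ erefl) /matrixP /(_ 0 0).
by rewrite mulmxA -colE !mxE.
Qed.

Lemma sym_mulmx_tr n (A : 'M[F]_n) (x y : 'cV_n) :
  A^T = A -> (A *m x)^T *m y = x^T *m (A *m y).
Proof. by move=> symA; rewrite trmx_mul symA mulmxA. Qed.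

Lemma sym_solvable n (A : 'M[F]_n) (b : 'cV_n) : A^T = A ->
  (forall l : 'cV_n, A *m l = 0 -> b^T *m l = 0) -> exists x : 'cV_n, A *m x = b.
Proof.
move=> symA /sub_rowmx_orth_ker /submxP [D bE]; exists D^T.
by rewrite -[A]symA -trmx_mul -bE trmxK.
Qed.

Lemma sym_sol_orth_ker n (A : 'M[F]_n) (x l b : 'cV_n) : A^T = A ->
  A *m x = b -> A *m l = 0 -> b^T *m l = 0.
Proof. by move=> symA <- Al; rewrite sym_mulmx_tr // Al mulmx0. Qed.

Lemma mxrank_congr m (P M : 'M[F]_m) : P \in unitmx ->
  \rank (P^T *m M *m P) = \rank M.
Proof.
move=> Pu; rewrite mxrankMfree ?row_free_unit // -mxrank_tr trmx_mul trmxK.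
by rewrite mxrankMfree ?row_free_unit // mxrank_tr.
Qed.

Lemma mxrank_block_schur_ul m n (A : 'M[F]_m) (X : 'M_(m, n)) (D : 'M_n) :
  \rank (block_mx A (A *m X) (X^T *m A) D) =
  (\rank A + \rank (D - X^T *m A *m X)%R)%N.
Proof.
pose P := block_mx 1%:M (- X) 0 1%:M.
have P_unit : P \in unitmx.
  suff /mulmx1_unit[] : P *m block_mx 1%:M X 0 1%:M = 1%:M by [].
  rewrite mulmx_block !mulmx1 !mul1mx !mulmx0 !mul0mx !addr0 add0r subrr.
  by rewrite -scalar_mx_block.
rewrite -rank_diag_block_mx -(mxrank_congr _ P_unit) tr_block_mx trmx0 !trmx1.
rewrite !mulmx_block !mulmx1 !mul1mx !mulmx0 !mul0mx !addr0 ?add0r.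
rewrite !linearN /= ?mulNmx ?mulmxN.
by rewrite !addNr mul0mx oppr0 add0r mulmxA addrC.
Qed.

Lemma mxrank_block_schur_dr m n (A : 'M[F]_m) (Y : 'M_(n, m)) (D : 'M_n) :
  \rank (block_mx A (Y^T *m D) (D *m Y) D) =
  (\rank (A - Y^T *m D *m Y)%R + \rank D)%N.
Proof.
pose P := block_mx 1%:M 0 (- Y) 1%:M.
have P_unit : P \in unitmx.
  suff /mulmx1_unit[] : P *m block_mx 1%:M 0 Y 1%:M = 1%:M by [].
  rewrite mulmx_block !mulmx1 !mul1mx !mulmx0 !mul0mx ?addr0 ?add0r ?addNr.
  by rewrite -scalar_mx_block.
rewrite -rank_diag_block_mx -(mxrank_congr _ P_unit) tr_block_mx trmx0 !trmx1.
rewrite !mulmx_block !mulmx1 !mul1mx !mulmx0 !mul0mx ?addr0 ?add0r.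
rewrite !linearN /= ?mulNmx ?mulmxN.
by rewrite !subrr mul0mx subr0 mulmxA.
Qed.

Lemma mxrank_block_delta_ul m n (A : 'M[F]_m) (D : 'M_n) (x : 'cV_m) i j :
  A^T = A -> A *m x = delta_mx i 0 ->
  \rank (block_mx A (delta_mx i j) (delta_mx j i) D) =
  (\rank A + \rank (D - x i 0 *: delta_mx j j)%R)%N.
Proof.
move=> symA Ax; pose X := x *m delta_mx 0 j.
have AX : A *m X = delta_mx i j by rewrite mulmxA Ax mul_delta_mx.
have XA : X^T *m A = delta_mx j i by rewrite -[A]symA -trmx_mul AX trmx_delta.
rewrite -AX -XA mxrank_block_schur_ul XA -(mul_delta_mx (0 : 'I_1)) mulmxA.
by rewrite -(mulmxA _ _ x) delta_row_mul mul_mx_scalar -scalemxAl mul_delta_mx.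
Qed.

Lemma mxrank_block_delta_dr m n (A : 'M[F]_m) (D : 'M_n) (y : 'cV_n) i j :
  D^T = D -> D *m y = delta_mx j 0 ->
  \rank (block_mx A (delta_mx i j) (delta_mx j i) D) =
  (\rank (A - y j 0 *: delta_mx i i)%R + \rank D)%N.
Proof.
move=> symD Dy; pose Y := y *m delta_mx 0 i.
have DY : D *m Y = delta_mx j i by rewrite mulmxA Dy mul_delta_mx.
have YD : Y^T *m D = delta_mx i j by rewrite -[D]symD -trmx_mul DY trmx_delta.
rewrite -DY -YD mxrank_block_schur_dr YD -(mul_delta_mx (0 : 'I_1)) mulmxA.
by rewrite -(mulmxA _ _ y) delta_row_mul mul_mx_scalar -scalemxAl mul_delta_mx.
Qed.

Lemma mxrank_add_sym_outer_ker n (A : 'M[F]_n) (e l : 'cV_n) :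
  A^T = A -> A *m l = 0 -> e^T *m l = 1%:M ->
  \rank (A + e *m e^T)%R = (\rank A).+1.
Proof.
move=> symA Al el; pose B := A + e *m e^T.
have eeT_e : (e *m e^T <= e^T)%MS := submxMl e e^T.
have e_B : (e^T <= B)%MS.
  have Bl : B *m l = e by rewrite mulmxDl Al add0r -mulmxA el mulmx1.
  by apply/submxP; exists l^T; rewrite -Bl trmx_mul linearD /= trmx_mul trmxK symA.
have e_notin_A : ~~ (e^T <= A)%MS.
  apply/negP => /submxP[D eD]; move: el; rewrite eD -mulmxA Al mulmx0.
  by move/(congr1 (fun M : 'M_1 => M 0 0)); rewrite !mxE => /eqP; rewrite eq_sym oner_eq0.
have BE : (B == A + e^T)%MS.
  apply/andP; split.
    by apply: addmx_sub; [exact: addsmxSl | exact: submx_trans eeT_e (addsmxSr _ _)].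
  rewrite addsmx_sub e_B andbT -[A in (A <= _)%MS](addrK (e *m e^T)).
  by apply: addmx_sub; rewrite ?eqmx_opp //; exact: submx_trans eeT_e e_B.
rewrite (eqmx_rank BE); apply/eqP; rewrite eqn_leq; apply/andP; split.
  have [le_sum _] := mxrank_adds_leqif A e^T.
  by apply: leq_trans le_sum _; rewrite -[X in (_ <= X)%N]addn1 leq_add2l rank_leq_row.
have : (A < A + e^T)%MS by rewrite ltmxE addsmxSl addsmx_sub submx_refl.
by rewrite ltmxErank => /andP[].
Qed.

Lemma mxrank_add_outer_col n (A : 'M[F]_n) (e x : 'cV_n) :
  A *m x = e -> e^T *m x = 0 -> \rank (A + e *m e^T)%R = \rank A.
Proof.
move=> Ax ex; have U_free : row_free (1%:M + x *m e^T).
  rewrite row_free_unit.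
  suff /mulmx1_unit[] : (1%:M + x *m e^T) *m (1%:M - x *m e^T) = 1%:M by [].
  rewrite mulmxDr !mulmxDl !mul1mx !mulmx1 mulmxN -mulmxA (mulmxA e^T) ex.
  by rewrite mul0mx mulmx0 subr0 addrK.
by rewrite -(mxrankMfree A U_free) mulmxDr mulmx1 mulmxA Ax.
Qed.

Lemma mxrank_sub_sym_outer_col n (A : 'M[F]_n) (e x : 'cV_n) :
  A^T = A -> A *m x = e -> e^T *m x = 1%:M -> (\rank (A - e *m e^T)%R).+1 = \rank A.
Proof.
move=> symA Ax ex; rewrite -[in RHS](subrK (e *m e^T) A).
apply/esym/(mxrank_add_sym_outer_ker _ _ ex).
  by rewrite linearB /= trmx_mul trmxK symA.
by rewrite mulmxBl Ax -mulmxA ex mulmx1 subrr.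
Qed.

End FieldMatrix.

Lemma quadmx_alternating_pchar2 (R : comNzRingType) n (A : 'M[R]_n) (x : 'cV_n) :
  2 \in [pchar R] -> A^T = A -> (forall i, A i i = 0) -> x^T *m A *m x = 0.
Proof.
(* A = B + B^T for the strictly upper triangular part B, and B, B^T define
   the same quadratic form. *)
move=> pchar2 symA A0; pose B := \matrix_(i, j) if (i < j)%N then A i j else 0.
have -> : A = B + B^T.
  apply/matrixP => i j; rewrite !mxE.
  case: (ltngtP i j) => [_|_|/val_inj->]; rewrite ?addr0 ?add0r ?A0 //.
  by rewrite -[in RHS]symA mxE.
have BT_B : x^T *m B^T *m x = x^T *m B *m x.
  by rewrite [LHS]mx11_scalar -tr_scalar_mx -mx11_scalar !trmx_mul !trmxK mulmxA.
by rewrite (mulmxDr x^T) mulmxDl BT_B; apply/matrixP => i j; rewrite !mxE addrr_pchar2.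
Qed.

Lemma F2_cases (x : 'F_2) : x = 0 \/ x = 1.
Proof. by case: x => -[|[|//]] ?; [left | right]; apply: val_inj. Qed.

Lemma F2_add11 : 1 + 1 = 0 :> 'F_2.
Proof. exact/eqP. Qed.

Lemma oppmx_F2 m n (M : 'M['F_2]_(m, n)) : - M = M.
Proof. by apply/matrixP => i j; rewrite mxE (oppr_pchar2 (pchar_Fp _)). Qed.

Lemma addmx_F2 m n (M : 'M['F_2]_(m, n)) : M + M = 0.
Proof. by rewrite -{1}(oppmx_F2 M) addNr. Qed.

Lemma cbarE n (v : 'I_n) : cbar v = ones n + delta_mx v 0.
Proof.
rewrite addrC; congr (_ + _); apply/matrixP => i j.
by rewrite (ord1 j) !mxE eqxx andbT; case: eqP.
Qed.

Local Notation ecol v := (delta_mx v (0 : 'I_1)).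

Section ClosedNeighbourhood.
Variables (n : nat) (e : rel 'I_n).
Hypothesis sg : simple_graph e.
Local Notation N := (Nmx e).

Lemma Nmx_sym : N^T = N.
Proof. by case: sg => sym _; apply/matrixP => i j; rewrite !mxE eq_sym sym. Qed.

Lemma Nmx_quad (x : 'cV_n) : x^T *m (N *m x) = x^T *m ones n.
Proof.
case: sg => sym irr; pose A : 'M['F_2]_n := \matrix_(i, j) (e i j)%:R.
have -> : N = 1%:M + A.
  by apply/matrixP => i j; rewrite !mxE; case: eqP => [->|_]; rewrite ?irr ?addr0 ?add0r.
have A_alt : x^T *m A *m x = 0.
  apply: quadmx_alternating_pchar2; first exact: pchar_Fp.
    by apply/matrixP => i j; rewrite !mxE sym.
  by move=> i; rewrite mxE irr.
rewrite mulmxDl mul1mx mulmxDr mulmxA A_alt addr0.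
apply/matrixP => i j; rewrite (ord1 i) (ord1 j) !mxE; apply: eq_bigr => k _.
by rewrite !mxE; case: (F2_cases (x k 0)) => ->; rewrite ?mulr0 ?mulr1.
Qed.

Lemma ones_orth_ker (l : 'cV_n) : N *m l = 0 -> (ones n)^T *m l = 0.
Proof. by move=> Nl; rewrite -[LHS]trmxK trmx_mul trmxK -Nmx_quad Nl mulmx0 trmx0. Qed.

Lemma Nmx_ones_solvable : exists p, N *m p = ones n.
Proof. exact: sym_solvable Nmx_sym ones_orth_ker. Qed.

Lemma Nmx_delta_val v (x p : 'cV_n) :
  N *m x = ecol v -> N *m p = ones n -> x v 0 = p v 0.
Proof.
move=> Nx Np; apply: (@scalar_mx_inj _ 0).
rewrite -(delta_row_mul x) -(delta_row_mul p) -trmx_delta -Nx.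
by rewrite [LHS]sym_mulmx_tr ?Nmx_sym // Nmx_quad -Np -sym_mulmx_tr ?Nmx_sym.
Qed.

(* [activated v 0] and [activated v 1] are the paper's never- and
   always-activated vertices. *)
Definition activated v (c : 'F_2) :=
  (forall l : 'cV_n, N *m l = 0 -> l v 0 = 0) /\
  (forall p : 'cV_n, N *m p = ones n -> p v 0 = c).

Section Vertex.
Variable v : 'I_n.

Lemma half_activatedP :
  reflect (exists2 l : 'cV_n, N *m l = 0 & l v 0 = 1) (half_activated e v).
Proof.
apply: (iffP existsP) => [[l /andP[/eqP Nl /eqP lv]] | [l Nl lv]]; first by exists l.
by exists l; rewrite Nl lv !eqxx.
Qed.

Lemma not_half_activatedP :
  reflect (forall l : 'cV_n, N *m l = 0 -> l v 0 = 0) (~~ half_activated e v).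
Proof.
apply: (iffP idP) => [/half_activatedP not_half l Nl | ker0].
  by case: (F2_cases (l v 0)) => // lv; case: not_half; exists l.
by apply/half_activatedP => -[l /ker0 ->].
Qed.

Lemma sol_val_eq (p q : 'cV_n) : ~~ half_activated e v ->
  N *m p = ones n -> N *m q = ones n -> p v 0 = q v 0.
Proof.
move=> /not_half_activatedP ker0 Np Nq; apply/eqP; rewrite -subr_eq0.
by have := ker0 (p - q); rewrite mulmxBr Np Nq subrr !mxE => ->.
Qed.

Lemma act_eqN1 : act e v = -1 <-> half_activated e v.
Proof. by rewrite /act; split; case: ifP => //; case: ifP. Qed.

Lemma act_eq0 : act e v = 0 <-> activated v 0.
Proof.
rewrite /act /always_activated; split.
  case: ifP => // not_half; case: ifP => // /negbT; rewrite not_half /=.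
  case/forallPn => p0; rewrite negb_imply => /andP[/eqP Np0 p0v] _.
  split; first exact/not_half_activatedP/negbT.
  move=> p Np; rewrite (sol_val_eq (negbT not_half) Np Np0).
  by case: (F2_cases (p0 v 0)) p0v => ->.
case=> /not_half_activatedP not_half sol0; rewrite (negbTE not_half) /=.
have [p Np] := Nmx_ones_solvable.
by case: ifP => // /forallP /(_ p) /implyP /(_ (introT eqP Np)); rewrite sol0.
Qed.

Lemma act_eq1 : act e v = 1 <-> activated v 1.
Proof.
rewrite /act /always_activated; split.
  case: ifP => // not_half; case: ifP => // /andP[_ /forallP always] _.
  split; first exact/not_half_activatedP/negbT.
  by move=> p Np; have /implyP/(_ (introT eqP Np))/eqP := always p.
case=> /not_half_activatedP not_half sol1; rewrite (negbTE not_half) /=.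
by case: ifP => // /negbT /forallPn [p]; rewrite negb_imply => /andP[/eqP /sol1 ->].
Qed.

Lemma act_cases : [\/ act e v = -1, act e v = 0 | act e v = 1].
Proof. by rewrite /act; case: ifP => _; [constructor 1 | case: ifP => _; constructor]. Qed.

Lemma activated_delta c :
  activated v c -> exists2 x : 'cV_n, N *m x = ecol v & x v 0 = c.
Proof.
case=> ker0 solc; have [p Np] := Nmx_ones_solvable.
have [x Nx] : exists x : 'cV_n, N *m x = ecol v.
  apply: sym_solvable Nmx_sym _ => l /ker0 lv.
  by rewrite trmx_delta delta_row_mul lv raddf0.
by exists x; rewrite // (Nmx_delta_val Nx Np) solc.
Qed.

Lemma activated_sol c (s : 'F_2) (p : 'cV_n) : activated v c ->
  N *m p = ones n + s *: ecol v -> p v 0 = c * (1 + s).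
Proof.
move=> a; case: (F2_cases s) => ->; first by rewrite scale0r !addr0 mulr1; apply: a.2.
rewrite scale1r F2_add11 mulr0 => Np; have [q Nq] := Nmx_ones_solvable.
have Npq : N *m (p + q) = ecol v by rewrite mulmxDr Np Nq addrAC addmx_F2 add0r.
have := Nmx_delta_val Npq Nq; rewrite mxE => /eqP.
by rewrite -subr_eq0 addrK => /eqP.
Qed.

Lemma activated_ker c (t : 'F_2) (l : 'cV_n) : activated v c ->
  N *m l = t *: ecol v -> l v 0 = c * t.
Proof.
move=> a; case: (F2_cases t) => ->; first by rewrite scale0r mulr0; apply: a.1.
have [p Np] := Nmx_ones_solvable.
by rewrite scale1r mulr1 => Nl; rewrite (Nmx_delta_val Nl Np) a.2.
Qed.

Lemma half_sol (s : 'F_2) (p : 'cV_n) : half_activated e v ->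
  N *m p = ones n + s *: ecol v -> s = 0.
Proof.
case/half_activatedP => l Nl lv Np; have := sym_sol_orth_ker Nmx_sym Np Nl.
rewrite linearD linearZ /= mulmxDl -scalemxAl ones_orth_ker // add0r.
rewrite trmx_delta delta_row_mul lv scale_scalar_mx mulr1.
by rewrite -(raddf0 (@scalar_mx _ 1)) => /scalar_mx_inj.
Qed.

Lemma half_ker (t : 'F_2) (l : 'cV_n) : half_activated e v ->
  N *m l = t *: ecol v -> t = 0.
Proof.
case/half_activatedP => k Nk kv Nl; have := sym_sol_orth_ker Nmx_sym Nl Nk.
rewrite linearZ /= -scalemxAl trmx_delta delta_row_mul kv scale_scalar_mx mulr1.
by rewrite -(raddf0 (@scalar_mx _ 1)) => /scalar_mx_inj.
Qed.

Lemma rank_add_delta_always : activated v 1 ->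
  (\rank (N + delta_mx v v)%R).+1 = \rank N.
Proof.
case/activated_delta => x Nx xv.
rewrite -(mul_delta_mx (0 : 'I_1)) -[delta_mx 0 v]trmx_delta -[_ *m _]oppmx_F2.
by apply: mxrank_sub_sym_outer_col Nmx_sym Nx _; rewrite trmx_delta delta_row_mul xv.
Qed.

Lemma rank_add_delta_half : half_activated e v ->
  \rank (N + delta_mx v v)%R = (\rank N).+1.
Proof.
case/half_activatedP => l Nl lv; rewrite -(mul_delta_mx (0 : 'I_1)) -[delta_mx 0 v]trmx_delta.
by apply: mxrank_add_sym_outer_ker Nmx_sym Nl _; rewrite trmx_delta delta_row_mul lv.
Qed.

End Vertex.
End ClosedNeighbourhood.

Lemma nullity_rank n (e : rel 'I_n) : (nullity e)%:Z = n%:Z - (\rank (Nmx e))%:Z.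
Proof. by rewrite /nullity mxrank_ker mxrank_tr -subzn ?rank_leq_row. Qed.

Section Join.
Variables (n1 n2 : nat) (e1 : rel 'I_n1) (e2 : rel 'I_n2) (u : 'I_n1) (w : 'I_n2).
Hypotheses (sg1 : simple_graph e1) (sg2 : simple_graph e2).
Local Notation H := (joinG e1 e2 u w).
Local Notation N1 := (Nmx e1).
Local Notation N2 := (Nmx e2).
Local Notation NH := (Nmx H).
Local Notation uH := (lshift n2 u).
Local Notation wH := (rshift n1 w).
Local Notation dnu := ((nullity H)%:Z - (nullity e1)%:Z - (nullity e2)%:Z).

Lemma joinG_simple : simple_graph H.
Proof.
case: sg1 sg2 => [sym1 irr1] [sym2 irr2]; split => [i j | i]; rewrite /joinG.
  by case: (split i) => a; case: (split j) => b; rewrite 1?andbC.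
by case: (split i).
Qed.

Lemma Nmx_joinG : NH = block_mx N1 (delta_mx u w) (delta_mx w u) N2.
Proof.
apply/matrixP => i j; rewrite -(splitK i) -(splitK j) /joinG.
case: (split i) => a; case: (split j) => b.
all: rewrite /= ?block_mxEul ?block_mxEur ?block_mxEdl ?block_mxEdr !mxE.
all: by rewrite ?(unsplitK (inl _)) ?(unsplitK (inr _)) ?eq_shift.
Qed.

Lemma Nmx_joinG_mul (s : 'cV_(n1 + n2)) : NH *m s =
  col_mx (N1 *m usubmx s + s wH 0 *: ecol u) (N2 *m dsubmx s + s uH 0 *: ecol w).
Proof.
rewrite -{1}[s]vsubmxK Nmx_joinG mul_block_col.
rewrite -[delta_mx u w](mul_delta_mx (0 : 'I_1)) -[delta_mx w u](mul_delta_mx (0 : 'I_1)).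
by rewrite -!mulmxA !delta_row_mul !mul_mx_scalar !mxE [_ *m dsubmx s + _]addrC.
Qed.

Lemma joinG_sol (s : 'cV_(n1 + n2)) : NH *m s = ones (n1 + n2) ->
  N1 *m usubmx s = ones n1 + s wH 0 *: ecol u /\
  N2 *m dsubmx s = ones n2 + s uH 0 *: ecol w.
Proof.
rewrite Nmx_joinG_mul /ones -(col_mx_const n1 n2) => /eq_col_mx[E1 E2].
by rewrite -E1 -E2 -!addrA !addmx_F2 !addr0.
Qed.

Lemma joinG_ker (L : 'cV_(n1 + n2)) : NH *m L = 0 ->
  N1 *m usubmx L = L wH 0 *: ecol u /\ N2 *m dsubmx L = L uH 0 *: ecol w.
Proof.
rewrite Nmx_joinG_mul -col_mx0 => /eq_col_mx[E1 E2].
by split; apply/eqP; rewrite -[X in _ == X]oppmx_F2 -addr_eq0 ?E1 ?E2.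
Qed.

Lemma joinG_kerI (l1 : 'cV_n1) (l2 : 'cV_n2) :
  N1 *m l1 = l2 w 0 *: ecol u -> N2 *m l2 = l1 u 0 *: ecol w ->
  NH *m col_mx l1 l2 = 0.
Proof.
move=> E1 E2; rewrite Nmx_joinG_mul col_mxKu col_mxKd col_mxEu col_mxEd E1 E2.
by rewrite !addmx_F2 col_mx0.
Qed.

Section SolutionValues.
Variable s : 'cV['F_2]_(n1 + n2).
Hypothesis sol : NH *m s = ones (n1 + n2).

Lemma joinG_sol_activated_u c : activated e1 u c -> s uH 0 = c * (1 + s wH 0).
Proof. by move=> a; have [/(activated_sol sg1 a)] := joinG_sol sol; rewrite mxE. Qed.

Lemma joinG_sol_activated_w c : activated e2 w c -> s wH 0 = c * (1 + s uH 0).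
Proof. by move=> a; have [_ /(activated_sol sg2 a)] := joinG_sol sol; rewrite mxE. Qed.

Lemma joinG_sol_half_u : half_activated e1 u -> s wH 0 = 0.
Proof. by move=> h; have [/(half_sol sg1 h)] := joinG_sol sol. Qed.

Lemma joinG_sol_half_w : half_activated e2 w -> s uH 0 = 0.
Proof. by move=> h; have [_ /(half_sol sg2 h)] := joinG_sol sol. Qed.

End SolutionValues.

Section KernelValues.
Variable L : 'cV['F_2]_(n1 + n2).
Hypothesis ker : NH *m L = 0.

Lemma joinG_ker_activated_u c : activated e1 u c -> L uH 0 = c * L wH 0.
Proof. by move=> a; have [/(activated_ker sg1 a)] := joinG_ker ker; rewrite mxE. Qed.

Lemma joinG_ker_activated_w c : activated e2 w c -> L wH 0 = c * L uH 0.
Proof. by move=> a; have [_ /(activated_ker sg2 a)] := joinG_ker ker; rewrite mxE. Qed.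

Lemma joinG_ker_half_u : half_activated e1 u -> L wH 0 = 0.
Proof. by move=> h; have [/(half_ker sg1 h)] := joinG_ker ker. Qed.

Lemma joinG_ker_half_w : half_activated e2 w -> L uH 0 = 0.
Proof. by move=> h; have [_ /(half_ker sg2 h)] := joinG_ker ker. Qed.

End KernelValues.

Lemma joinG_nullity_gap : dnu = (\rank N1 + \rank N2)%:Z - (\rank NH)%:Z.
Proof. by rewrite !nullity_rank; lia. Qed.

Lemma joinG_rank_activated_u c : activated e1 u c ->
  \rank NH = (\rank N1 + \rank (N2 + c *: delta_mx w w)%R)%N.
Proof.
case/(activated_delta sg1) => x Nx xu.
by rewrite Nmx_joinG (mxrank_block_delta_ul _ _ (Nmx_sym sg1) Nx) xu oppmx_F2.
Qed.

Lemma joinG_rank_activated_w c : activated e2 w c ->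
  \rank NH = (\rank (N1 + c *: delta_mx u u)%R + \rank N2)%N.
Proof.
case/(activated_delta sg2) => y Ny yw.
by rewrite Nmx_joinG (mxrank_block_delta_dr _ _ (Nmx_sym sg2) Ny) yw oppmx_F2.
Qed.

Lemma joinG_rank_half : half_activated e1 u -> half_activated e2 w ->
  \rank NH = (\rank N1 + \rank N2).+2.
Proof.
(* N1 x = e_u has no solution, so first add e_uH e_uH^T, which keeps the rank
   since N(H) (0, l2) = e_uH; afterwards N1 + e_u e_u^T maps l1 to e_u. *)
move=> h1 h2; have /half_activatedP[l1 Nl1 l1u] := h1.
have /half_activatedP[l2 Nl2 l2w] := h2.
have NH_l2 : NH *m col_mx 0 l2 = delta_mx uH 0.
  rewrite Nmx_joinG_mul col_mxKu col_mxKd col_mxEu col_mxEd mulmx0 add0r l2w.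
  by rewrite scale1r Nl2 mxE scale0r addr0 delta_mx_ushift.
have -> : \rank NH = \rank (NH + delta_mx uH uH)%R.
  rewrite -(mul_delta_mx (0 : 'I_1)) -[delta_mx 0 uH]trmx_delta.
  rewrite (mxrank_add_outer_col NH_l2) //.
  by rewrite trmx_delta delta_row_mul col_mxEu mxE raddf0.
have -> : (NH + delta_mx uH uH)%R =
    block_mx (N1 + delta_mx u u)%R (delta_mx u w) (delta_mx w u) N2.
  rewrite Nmx_joinG delta_mx_ushift delta_mx_lshift -[0 : 'M_(n2, _)]row_mx0.
  by rewrite -block_mxEv add_block_mx !addr0.
have sym1 : (N1 + delta_mx u u)^T = N1 + delta_mx u u.
  by rewrite linearD /= Nmx_sym // trmx_delta.
have N1u_l1 : (N1 + delta_mx u u) *m l1 = delta_mx u 0.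
  rewrite mulmxDl Nl1 add0r -(mul_delta_mx (0 : 'I_1)) -mulmxA delta_row_mul l1u.
  by rewrite mulmx1.
rewrite (mxrank_block_delta_ul _ _ sym1 N1u_l1) l1u scale1r oppmx_F2.
by rewrite !rank_add_delta_half // addSn addnS.
Qed.

Lemma joinG_never_never : act e1 u = 0 -> act e2 w = 0 ->
  act H uH = 0 /\ act H wH = 0 /\ dnu = 0 /\
  forall s, NH *m s = ones (n1 + n2) ->
    N1 *m usubmx s = ones n1 /\ N2 *m dsubmx s = ones n2.
Proof.
move=> /(act_eq0 sg1) a1 /(act_eq0 sg2) a2.
have sol_at (s : 'cV_(n1 + n2)) (sol : NH *m s = ones _) : s uH 0 = 0 /\ s wH 0 = 0.
  by rewrite (joinG_sol_activated_u sol a1) (joinG_sol_activated_w sol a2) !mul0r.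
have ker_at (L : 'cV_(n1 + n2)) (ker : NH *m L = 0) : L uH 0 = 0 /\ L wH 0 = 0.
  by rewrite (joinG_ker_activated_u ker a1) (joinG_ker_activated_w ker a2) !mul0r.
split; [|split; [|split]].
- by apply/(act_eq0 joinG_simple); split=> [L /ker_at[] | s /sol_at[]].
- by apply/(act_eq0 joinG_simple); split=> [L /ker_at[] | s /sol_at[]].
- by rewrite joinG_nullity_gap (joinG_rank_activated_u a1) scale0r addr0 subrr.
- move=> s sol; have [-> ->] := joinG_sol sol; have [-> ->] := sol_at s sol.
  by rewrite !scale0r !addr0.
Qed.

Lemma joinG_never_always : act e1 u = 0 -> act e2 w = 1 ->
  act H uH = 0 /\ act H wH = 1 /\ dnu = 0 /\
  forall s, NH *m s = ones (n1 + n2) ->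
    N1 *m usubmx s = cbar u /\ N2 *m dsubmx s = ones n2.
Proof.
move=> /(act_eq0 sg1) a1 /act_eq1 a2.
have sol_at (s : 'cV_(n1 + n2)) (sol : NH *m s = ones _) : s uH 0 = 0 /\ s wH 0 = 1.
  have su : s uH 0 = 0 by rewrite (joinG_sol_activated_u sol a1) mul0r.
  by rewrite (joinG_sol_activated_w sol a2) su addr0 mulr1.
have ker_at (L : 'cV_(n1 + n2)) (ker : NH *m L = 0) : L uH 0 = 0 /\ L wH 0 = 0.
  have Lu : L uH 0 = 0 by rewrite (joinG_ker_activated_u ker a1) mul0r.
  by rewrite (joinG_ker_activated_w ker a2) Lu mulr0.
split; [|split; [|split]].
- by apply/(act_eq0 joinG_simple); split=> [L /ker_at[] | s /sol_at[]].
- by apply/act_eq1; split=> [L /ker_at[] | s /sol_at[]].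
- by rewrite joinG_nullity_gap (joinG_rank_activated_u a1) scale0r addr0 subrr.
- move=> s sol; have [-> ->] := joinG_sol sol; have [-> ->] := sol_at s sol.
  by rewrite scale0r scale1r addr0 cbarE.
Qed.

Lemma joinG_always_never : act e1 u = 1 -> act e2 w = 0 ->
  act H uH = 1 /\ act H wH = 0 /\ dnu = 0 /\
  forall s, NH *m s = ones (n1 + n2) ->
    N1 *m usubmx s = ones n1 /\ N2 *m dsubmx s = cbar w.
Proof.
move=> /act_eq1 a1 /(act_eq0 sg2) a2.
have sol_at (s : 'cV_(n1 + n2)) (sol : NH *m s = ones _) : s uH 0 = 1 /\ s wH 0 = 0.
  have sw : s wH 0 = 0 by rewrite (joinG_sol_activated_w sol a2) mul0r.
  by rewrite (joinG_sol_activated_u sol a1) sw addr0 mulr1.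
have ker_at (L : 'cV_(n1 + n2)) (ker : NH *m L = 0) : L uH 0 = 0 /\ L wH 0 = 0.
  have Lw : L wH 0 = 0 by rewrite (joinG_ker_activated_w ker a2) mul0r.
  by rewrite (joinG_ker_activated_u ker a1) Lw mulr0.
split; [|split; [|split]].
- by apply/act_eq1; split=> [L /ker_at[] | s /sol_at[]].
- by apply/(act_eq0 joinG_simple); split=> [L /ker_at[] | s /sol_at[]].
- by rewrite joinG_nullity_gap (joinG_rank_activated_w a2) scale0r addr0 subrr.
- move=> s sol; have [-> ->] := joinG_sol sol; have [-> ->] := sol_at s sol.
  by rewrite scale0r scale1r addr0 cbarE.
Qed.

Lemma joinG_never_half : act e1 u = 0 -> act e2 w = -1 ->
  act H uH = 0 /\ act H wH = -1 /\ dnu = 0 /\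
  forall s, NH *m s = ones (n1 + n2) -> N2 *m dsubmx s = ones n2 /\
    (s wH 0 = 0 -> N1 *m usubmx s = ones n1) /\
    (s wH 0 = 1 -> N1 *m usubmx s = cbar u).
Proof.
move=> /(act_eq0 sg1) a1 /act_eqN1 h2.
split; [|split; [|split]].
- apply/(act_eq0 joinG_simple); split=> [L ker | s sol].
    by rewrite (joinG_ker_activated_u ker a1) mul0r.
  by rewrite (joinG_sol_activated_u sol a1) mul0r.
- apply/act_eqN1/half_activatedP.
  have [x Nx xu] := activated_delta sg1 a1; have /half_activatedP[l Nl lw] := h2.
  exists (col_mx x l); last by rewrite col_mxEd.
  by apply: joinG_kerI; rewrite ?Nx ?Nl ?lw ?xu ?scale1r ?scale0r.
- by rewrite joinG_nullity_gap (joinG_rank_activated_u a1) scale0r addr0 subrr.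
- move=> s sol; have [-> ->] := joinG_sol sol.
  by rewrite (joinG_sol_half_w sol h2) scale0r addr0 cbarE; split=> //; split=> ->;
    rewrite ?scale0r ?scale1r ?addr0.
Qed.

Lemma joinG_half_never : act e1 u = -1 -> act e2 w = 0 ->
  act H uH = -1 /\ act H wH = 0 /\ dnu = 0 /\
  forall s, NH *m s = ones (n1 + n2) -> N1 *m usubmx s = ones n1 /\
    (s uH 0 = 0 -> N2 *m dsubmx s = ones n2) /\
    (s uH 0 = 1 -> N2 *m dsubmx s = cbar w).
Proof.
move=> /act_eqN1 h1 /(act_eq0 sg2) a2.
split; [|split; [|split]].
- apply/act_eqN1/half_activatedP.
  have [y Ny yw] := activated_delta sg2 a2; have /half_activatedP[l Nl lu] := h1.
  exists (col_mx l y); last by rewrite col_mxEu.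
  by apply: joinG_kerI; rewrite ?Ny ?Nl ?lu ?yw ?scale1r ?scale0r.
- apply/(act_eq0 joinG_simple); split=> [L ker | s sol].
    by rewrite (joinG_ker_activated_w ker a2) mul0r.
  by rewrite (joinG_sol_activated_w sol a2) mul0r.
- by rewrite joinG_nullity_gap (joinG_rank_activated_w a2) scale0r addr0 subrr.
- move=> s sol; have [-> ->] := joinG_sol sol.
  by rewrite (joinG_sol_half_u sol h1) scale0r addr0 cbarE; split=> //; split=> ->;
    rewrite ?scale0r ?scale1r ?addr0.
Qed.

Lemma joinG_always_always : act e1 u = 1 -> act e2 w = 1 ->
  act H uH = -1 /\ act H wH = -1 /\ dnu = 1 /\
  forall s, NH *m s = ones (n1 + n2) ->
    (s uH 0 = 0 /\ s wH 0 = 1 /\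
     N1 *m usubmx s = cbar u /\ N2 *m dsubmx s = ones n2) \/
    (s uH 0 = 1 /\ s wH 0 = 0 /\
     N1 *m usubmx s = ones n1 /\ N2 *m dsubmx s = cbar w).
Proof.
move=> /act_eq1 a1 /act_eq1 a2.
have [x Nx xu] := activated_delta sg1 a1; have [y Ny yw] := activated_delta sg2 a2.
have ker_xy : NH *m col_mx x y = 0.
  by apply: joinG_kerI; rewrite ?Nx ?Ny ?xu ?yw scale1r.
split; [|split; [|split]].
- by apply/act_eqN1/half_activatedP; exists (col_mx x y); rewrite ?col_mxEu.
- by apply/act_eqN1/half_activatedP; exists (col_mx x y); rewrite ?col_mxEd.
- rewrite joinG_nullity_gap (joinG_rank_activated_u a1) scale1r.
  by rewrite -(rank_add_delta_always sg2 a2); lia.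
- move=> s sol; have [-> ->] := joinG_sol sol; rewrite !cbarE.
  rewrite (joinG_sol_activated_u sol a1) mul1r.
  by case: (F2_cases (s wH 0)) => ->; rewrite ?addr0 ?F2_add11 ?scale0r ?scale1r ?addr0;
    [right | left].
Qed.

Lemma joinG_always_half : act e1 u = 1 -> act e2 w = -1 ->
  act H uH = 0 /\ act H wH = 1 /\ dnu = -1 /\
  forall s, NH *m s = ones (n1 + n2) ->
    N1 *m usubmx s = cbar u /\ N2 *m dsubmx s = ones n2.
Proof.
move=> /act_eq1 a1 /act_eqN1 h2.
have sol_at (s : 'cV_(n1 + n2)) (sol : NH *m s = ones _) : s uH 0 = 0 /\ s wH 0 = 1.
  have su := joinG_sol_half_w sol h2; split=> //.
  have := joinG_sol_activated_u sol a1; rewrite su mul1r.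
  by case: (F2_cases (s wH 0)) => -> /eqP.
have ker_at (L : 'cV_(n1 + n2)) (ker : NH *m L = 0) : L uH 0 = 0 /\ L wH 0 = 0.
  have Lu := joinG_ker_half_w ker h2; split=> //.
  by have := joinG_ker_activated_u ker a1; rewrite Lu mul1r.
split; [|split; [|split]].
- by apply/(act_eq0 joinG_simple); split=> [L /ker_at[] | s /sol_at[]].
- by apply/act_eq1; split=> [L /ker_at[] | s /sol_at[]].
- rewrite joinG_nullity_gap (joinG_rank_activated_u a1) scale1r.
  by rewrite rank_add_delta_half //; lia.
- move=> s sol; have [-> ->] := joinG_sol sol; have [-> ->] := sol_at s sol.
  by rewrite scale0r scale1r addr0 cbarE.
Qed.

Lemma joinG_half_always : act e1 u = -1 -> act e2 w = 1 ->
  act H uH = 1 /\ act H wH = 0 /\ dnu = -1 /\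
  forall s, NH *m s = ones (n1 + n2) ->
    N1 *m usubmx s = ones n1 /\ N2 *m dsubmx s = cbar w.
Proof.
move=> /act_eqN1 h1 /act_eq1 a2.
have sol_at (s : 'cV_(n1 + n2)) (sol : NH *m s = ones _) : s uH 0 = 1 /\ s wH 0 = 0.
  have sw := joinG_sol_half_u sol h1; split=> //.
  have := joinG_sol_activated_w sol a2; rewrite sw mul1r.
  by case: (F2_cases (s uH 0)) => -> /eqP.
have ker_at (L : 'cV_(n1 + n2)) (ker : NH *m L = 0) : L uH 0 = 0 /\ L wH 0 = 0.
  have Lw := joinG_ker_half_u ker h1; split=> //.
  by have := joinG_ker_activated_w ker a2; rewrite Lw mul1r.
split; [|split; [|split]].
- by apply/act_eq1; split=> [L /ker_at[] | s /sol_at[]].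
- by apply/(act_eq0 joinG_simple); split=> [L /ker_at[] | s /sol_at[]].
- rewrite joinG_nullity_gap (joinG_rank_activated_w a2) scale1r.
  by rewrite rank_add_delta_half //; lia.
- move=> s sol; have [-> ->] := joinG_sol sol; have [-> ->] := sol_at s sol.
  by rewrite scale0r scale1r addr0 cbarE.
Qed.

Lemma joinG_half_half : act e1 u = -1 -> act e2 w = -1 ->
  act H uH = 0 /\ act H wH = 0 /\ dnu = -2 /\
  forall s, NH *m s = ones (n1 + n2) ->
    N1 *m usubmx s = ones n1 /\ N2 *m dsubmx s = ones n2.
Proof.
move=> /act_eqN1 h1 /act_eqN1 h2.
have sol_at (s : 'cV_(n1 + n2)) (sol : NH *m s = ones _) : s uH 0 = 0 /\ s wH 0 = 0.
  by rewrite (joinG_sol_half_w sol h2) (joinG_sol_half_u sol h1).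
have ker_at (L : 'cV_(n1 + n2)) (ker : NH *m L = 0) : L uH 0 = 0 /\ L wH 0 = 0.
  by rewrite (joinG_ker_half_w ker h2) (joinG_ker_half_u ker h1).
split; [|split; [|split]].
- by apply/(act_eq0 joinG_simple); split=> [L /ker_at[] | s /sol_at[]].
- by apply/(act_eq0 joinG_simple); split=> [L /ker_at[] | s /sol_at[]].
- by rewrite joinG_nullity_gap joinG_rank_half //; lia.
- move=> s sol; have [-> ->] := joinG_sol sol; have [-> ->] := sol_at s sol.
  by rewrite !scale0r !addr0.
Qed.

Lemma joinG_compact :
  dnu = (if (act e1 u == -1) && (act e2 w == -1) then -2 else act e1 u * act e2 w) /\
  ((act H uH - act e1 u * (1 + act e2 w)) %% 3 = 0)%Z /\
  ((act H wH - act e2 w * (1 + act e1 u)) %% 3 = 0)%Z.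
Proof.
case: (act_cases e1 u) => h1; case: (act_cases e2 w) => h2;
  [ have [-> [-> [-> _]]] := joinG_half_half h1 h2
  | have [-> [-> [-> _]]] := joinG_half_never h1 h2
  | have [-> [-> [-> _]]] := joinG_half_always h1 h2
  | have [-> [-> [-> _]]] := joinG_never_half h1 h2
  | have [-> [-> [-> _]]] := joinG_never_never h1 h2
  | have [-> [-> [-> _]]] := joinG_never_always h1 h2
  | have [-> [-> [-> _]]] := joinG_always_half h1 h2
  | have [-> [-> [-> _]]] := joinG_always_never h1 h2
  | have [-> [-> [-> _]]] := joinG_always_always h1 h2 ];
  by rewrite h1 h2.
Qed.

End Join.

Theorem theorem3p3 (n1 n2 : nat) (e1 : rel 'I_n1) (e2 : rel 'I_n2)
  (u : 'I_n1) (w : 'I_n2) :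
  simple_graph e1 -> simple_graph e2 ->
  let H := joinG e1 e2 u w in
  let uH := lshift n2 u in
  let wH := rshift n1 w in
  let dnu : int := (nullity H)%:Z - (nullity e1)%:Z - (nullity e2)%:Z in
  let a1 := act e1 u in
  let a2 := act e2 w in
  let N1 (s : 'cV['F_2]_(n1 + n2)) := Nmx e1 *m usubmx s in
  let N2 (s : 'cV['F_2]_(n1 + n2)) := Nmx e2 *m dsubmx s in
  let sol (s : 'cV['F_2]_(n1 + n2)) := Nmx H *m s = ones (n1 + n2) in
  (* (i) (0,0) *)
  (a1 = 0 -> a2 = 0 ->
     act H uH = 0 /\ act H wH = 0 /\ dnu = 0 /\
     forall s, sol s -> N1 s = ones n1 /\ N2 s = ones n2) /\
  (* (ii) (0,1) *)
  (a1 = 0 -> a2 = 1 ->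
     act H uH = 0 /\ act H wH = 1 /\ dnu = 0 /\
     forall s, sol s -> N1 s = cbar u /\ N2 s = ones n2) /\
  (* (ii') (1,0) *)
  (a1 = 1 -> a2 = 0 ->
     act H uH = 1 /\ act H wH = 0 /\ dnu = 0 /\
     forall s, sol s -> N1 s = ones n1 /\ N2 s = cbar w) /\
  (* (iii) (0,-1) *)
  (a1 = 0 -> a2 = -1 ->
     act H uH = 0 /\ act H wH = -1 /\ dnu = 0 /\
     forall s, sol s -> N2 s = ones n2 /\
       (s wH 0 = 0 -> N1 s = ones n1) /\ (s wH 0 = 1 -> N1 s = cbar u)) /\
  (* (iii') (-1,0) *)
  (a1 = -1 -> a2 = 0 ->
     act H uH = -1 /\ act H wH = 0 /\ dnu = 0 /\
     forall s, sol s -> N1 s = ones n1 /\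
       (s uH 0 = 0 -> N2 s = ones n2) /\ (s uH 0 = 1 -> N2 s = cbar w)) /\
  (* (iv) (1,1) *)
  (a1 = 1 -> a2 = 1 ->
     act H uH = -1 /\ act H wH = -1 /\ dnu = 1 /\
     forall s, sol s ->
       (s uH 0 = 0 /\ s wH 0 = 1 /\ N1 s = cbar u /\ N2 s = ones n2) \/
       (s uH 0 = 1 /\ s wH 0 = 0 /\ N1 s = ones n1 /\ N2 s = cbar w)) /\
  (* (v) (1,-1) *)
  (a1 = 1 -> a2 = -1 ->
     act H uH = 0 /\ act H wH = 1 /\ dnu = -1 /\
     forall s, sol s -> N1 s = cbar u /\ N2 s = ones n2) /\
  (* (v') (-1,1) *)
  (a1 = -1 -> a2 = 1 ->
     act H uH = 1 /\ act H wH = 0 /\ dnu = -1 /\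
     forall s, sol s -> N1 s = ones n1 /\ N2 s = cbar w) /\
  (* (vi) (-1,-1) *)
  (a1 = -1 -> a2 = -1 ->
     act H uH = 0 /\ act H wH = 0 /\ dnu = -2 /\
     forall s, sol s -> N1 s = ones n1 /\ N2 s = ones n2) /\
  (* compact form *)
  (dnu = (if (a1 == -1) && (a2 == -1) then -2 else a1 * a2)) /\
  ((act H uH - a1 * (1 + a2)) %% 3 = 0)%Z /\
  ((act H wH - a2 * (1 + a1)) %% 3 = 0)%Z.
Proof.
move=> sg1 sg2.
exact: conj (joinG_never_never sg1 sg2) (conj (joinG_never_always sg1 sg2)
  (conj (joinG_always_never sg1 sg2) (conj (joinG_never_half sg1 sg2)
  (conj (joinG_half_never sg1 sg2) (conj (joinG_always_always sg1 sg2)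
  (conj (joinG_always_half sg1 sg2) (conj (joinG_half_always sg1 sg2)
  (conj (joinG_half_half sg1 sg2) (joinG_compact u w sg1 sg2))))))))).
Qed.
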